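(* Let $\mathbf{H}$ be a finite commutative semihypergroup with states $e_1,\dots,e_n$ that is derived from a group. Then there exist an abelian group $G$ of order $n$ and an enumeration $G=\{g_1,\dots,g_n\}$ such that every matrix $A_i$ ($i=1,\dots,n$) is a linear combination of the matrices $G_1,\dots,G_n$ of the regular representation of $G$, where $G_l$ is the $n\times n$ permutation matrix with $(k,j)$ entry equal to $1$ if $g_l g_j=g_k$ and $0$ otherwise.
   Context: A finite commutative semihypergroup $\mathbf{H}$ with $n$ states $e_1,\dots,e_n$ is given by a convolution $e_i*e_j=\sum_{k=1}^n a_{i,j}(k)e_k$ ($i,j=1,\dots,n$), extended bilinearly, where $a_{i,j}(k)\ge 0$, $\sum_{k=1}^n a_{i,j}(k)=1$ for all $i,j$, the convolution is associative and commutative ($a_{i,j}(k)=a_{j,i}(k)$). Let $a_{i,j}\in\mathbb{R}^n$ denote the column vector $(a_{i,j}(1),\dots,a_{i,j}(n))^T$; let $A_i$ be the $n\times n$ matrix with columns $a_{i,1},\dots,a_{i,n}$ (so its $(k,j)$ entry is $a_{i,j}(k)$) and $B_i$ the matrix with columns $a_{1,i},\dots,a_{n,i}$. $\mathbf{H}$ is called derived from a group if it satisfies condition (A): the set $\{a_{i,j}: 1\le i,j\le n\}$ contains exactly $n$ distinct vectors, and for each $i$ the columns of $A_i$ are linearly independent and the columns of $B_i$ are linearly independent. *)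

From HB Require Import structures.
From mathcomp Require Import all_boot all_order all_algebra all_fingroup.
Set Implicit Arguments. Unset Strict Implicit. Unset Printing Implicit Defensive.
Import Order.TTheory GRing.Theory Num.Theory.
Local Open Scope ring_scope.

(* Structure constants: a i j k = a_{i,j}(k), i.e. e_i * e_j = sum_k a i j k e_k. *)
Section HG.
Variables (R : realFieldType) (n : nat).
Variable a : 'I_n -> 'I_n -> 'I_n -> R.

Definition is_comm_semihypergroup : Prop :=
  [/\ (forall i j k, 0 <= a i j k),
      (forall i j, \sum_(k < n) a i j k = 1),
      (forall i j k, a i j k = a j i k) &
      (* associativity: (e_i * e_j) * e_l = e_i * (e_j * e_l) *)
      (forall i j l m, \sum_(k < n) a i j k * a k l m
                     = \sum_(k < n) a j l k * a i k m)].

Definition avec (i j : 'I_n) : 'cV[R]_n := \col_k a i j k.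

Definition Amat (i : 'I_n) : 'M[R]_n := \matrix_(k, j) a i j k.
Definition Bmat (i : 'I_n) : 'M[R]_n := \matrix_(k, j) a j i k.

Definition cols_independent (M : 'M[R]_n) : bool := row_free M^T.

Definition derived_from_group : Prop :=
  [/\ size (undup [seq avec i j | i <- enum 'I_n, j <- enum 'I_n]) = n,
      (forall i, cols_independent (Amat i)) &
      (forall i, cols_independent (Bmat i))].
End HG.

Definition regmx (R : realFieldType) (n : nat) (gT : finGroupType) (g : 'I_n -> gT)
  (l : 'I_n) : 'M[R]_n :=
  \matrix_(k, j) (if (g l * g j)%g == g k then 1 else 0).

From HB Require Import structures.
From mathcomp Require Import all_boot all_order all_algebra all_fingroup.
Set Implicit Arguments. Unset Strict Implicit. Unset Printing Implicit Defensive.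
Import Order.TTheory GRing.Theory Num.Theory.
Local Open Scope ring_scope.

(* Condition (A) says that the columns of every A_j, and of every B_j, run
   through the same n distinct vectors a_{i,j}.  Hence A_j = A_o P_j for a
   column permutation rho_j of a fixed invertible A_o.  Associativity and
   commutativity make the A_i commute, so every P_j commutes with every A_i
   and the rho_j commute with one another.  The group they generate is thus
   abelian, and it is transitive because the columns of B_o exhaust the
   vectors as well; an abelian transitive permutation group is regular.
   Naming each state x after the group element r_x that maps o to x, the
   invariance a_i(r_x y, r_x k) = a_i(y, k) yields A_i = sum_l a_{i,o}(l) G_l. *)

Lemma col_inj_row_free_tr (F : fieldType) m n (M : 'M[F]_(m, n)) :
  row_free M^T -> injective (fun j => col j M).
Proof.
move=> freeMt z z' /(congr1 trmx); rewrite !tr_col !rowE => /(row_free_inj freeMt).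
move/matrixP/(_ 0 z); rewrite !mxE !eqxx /=.
by case: eqP => // _ /eqP; rewrite oner_eq0.
Qed.

Lemma inj_ord_codom_subset (T : eqType) n (s : seq T) (f : 'I_n -> T) :
  size s = n -> injective f -> (forall i, f i \in s) -> {subset s <= codom f}.
Proof.
move=> size_s inj_f f_s.
have uniq_f : uniq (codom f) by rewrite map_inj_uniq ?enum_uniq.
have sub_f : {subset codom f <= s} by move=> _ /codomP[i ->].
have [|_ eq_f] := uniq_min_size uniq_f sub_f; first by rewrite size_codom card_ord size_s.
by move=> x; rewrite eq_f.
Qed.

Lemma col_perm_inj (T : Type) m n (M : 'M[T]_(m, n)) :
  injective (fun j => col j M) -> injective (fun s => col_perm s M).
Proof.
move=> inj_col s t eq_st; apply/permP => y; apply: inj_col.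
by rewrite -!col_colsub -!col_permEsub eq_st.
Qed.

Section AbelianTransitivePerm.
Variables (T : finType) (H : {group {perm T}}) (x0 : T) (r : T -> {perm T}).
Hypotheses (abH : abelian H) (r_in : forall x, r x \in H)
  (r_x0 : forall x, r x x0 = x).

Lemma abelian_transitive_perm_eq h h' :
  h \in H -> h' \in H -> h x0 = h' x0 -> h = h'.
Proof.
have commE h1 y : h1 \in H -> h1 y = r y (h1 x0).
  by move=> Hh1; rewrite -permM (centsP abH _ Hh1 _ (r_in y)) permM r_x0.
by move=> Hh Hh' eq_x0; apply/permP => y; rewrite commE // [RHS]commE // eq_x0.
Qed.

Lemma regular_subg_bij : bijective (fun x => subg H (r x)).
Proof.
exists (fun u : subg_of H => sgval u x0) => [x | u]; first by rewrite subgK.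
apply: val_inj; rewrite /= subgK //.
by apply: abelian_transitive_perm_eq; rewrite ?subgP.
Qed.

Lemma regular_subg_mulE l j k :
  ((subg H (r l) * subg H (r j))%g == subg H (r k)) = (r j l == k).
Proof.
rewrite -val_eqE /= !subgK //; apply/eqP/eqP => [eq_lj | <-].
  by rewrite -(r_x0 k) -eq_lj permM r_x0.
by apply: abelian_transitive_perm_eq; rewrite ?groupM // permM !r_x0.
Qed.

End AbelianTransitivePerm.

Section CommutativeHypergroup.
Variables (R : realFieldType) (n : nat) (a : 'I_n -> 'I_n -> 'I_n -> R).
Hypotheses (a_comm : forall i j k, a i j k = a j i k)
  (a_assoc : forall i j l m,
     \sum_(k < n) a i j k * a k l m = \sum_(k < n) a j l k * a i k m).

Lemma Amat_mulE i j :
  Amat a i *m Amat a j = \matrix_(m, l) \sum_(k < n) a i j k * a k l m.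
Proof.
apply/matrixP => m l; rewrite !mxE a_assoc.
by apply: eq_bigr => k _; rewrite !mxE mulrC.
Qed.

Lemma Amat_comm i j : Amat a i *m Amat a j = Amat a j *m Amat a i.
Proof.
rewrite !Amat_mulE; apply/matrixP => m l; rewrite !mxE.
by apply: eq_bigr => k _; rewrite a_comm.
Qed.

Variables (o : 'I_n) (rho : 'I_n -> {perm 'I_n}).
Hypotheses (Ao_unit : Amat a o \in unitmx)
  (Amat_rho : forall j, Amat a j = col_perm (rho j) (Amat a o)).

Lemma Amat_col_row_perm i j :
  col_perm (rho j) (Amat a i) = row_perm (rho j)^-1 (Amat a i).
Proof.
have Aj : Amat a j = Amat a o *m perm_mx (rho j)^-1 by rewrite Amat_rho col_permE.
apply: (can_inj (mulKmx Ao_unit)).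
rewrite col_permE row_permE mulmxA (Amat_comm o i) -mulmxA -Aj.
by rewrite Amat_comm Aj mulmxA.
Qed.

Lemma a_rho_invariant i j y k : a i (rho j y) (rho j k) = a i y k.
Proof.
have /matrixP/(_ (rho j k) y) := Amat_col_row_perm i j.
by rewrite !mxE permK.
Qed.

Lemma rho_commute i j : commute (rho i) (rho j).
Proof.
have inj_col : injective (fun k => col k (Amat a o)).
  by apply: col_inj_row_free_tr; rewrite row_free_unit unitmx_tr.
apply: (col_perm_inj inj_col).
rewrite !col_permM -!Amat_rho Amat_col_row_perm (Amat_rho j).
by rewrite -col_row_permC -Amat_col_row_perm -Amat_rho.
Qed.

End CommutativeHypergroup.

Lemma Amat_sum_perm (R : realFieldType) n (a : 'I_n -> 'I_n -> 'I_n -> R) i o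
    (r : 'I_n -> {perm 'I_n}) :
    (forall x, r x o = x) -> (forall x y k, a i (r x y) (r x k) = a i y k) ->
  Amat a i = \sum_(l < n) a i o l *: \matrix_(k, j) (if r j l == k then 1 else 0).
Proof.
move=> r_o a_r; apply/matrixP => k j; rewrite summxE mxE.
under eq_bigr do rewrite !mxE.
rewrite (bigD1 ((r j)^-1%g k)) //= permKV eqxx mulr1 big1 ?addr0.
  by rewrite -(a_r j o) r_o permKV.
move=> l /eqP ne_l; case: eqP => [eq_l | _]; last by rewrite mulr0.
by case: ne_l; rewrite -eq_l permK.
Qed.

Section DerivedFromGroup.
Variables (R : realFieldType) (n : nat) (a : 'I_n -> 'I_n -> 'I_n -> R).
Hypothesis a_derived : derived_from_group a.

Lemma col_Amat i j : col j (Amat a i) = avec a i j.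
Proof. by apply/matrixP => k l; rewrite !mxE. Qed.

Lemma col_Bmat i j : col j (Bmat a i) = avec a j i.
Proof. by apply/matrixP => k l; rewrite !mxE. Qed.

Lemma avec_inj_r i : injective (avec a i).
Proof.
case: a_derived => _ A_free _ j j'; rewrite -!col_Amat.
exact: col_inj_row_free_tr (A_free i) j j'.
Qed.

Lemma avec_inj_l j : injective (fun i => avec a i j).
Proof.
case: a_derived => _ _ B_free i i'; rewrite /= -!col_Bmat.
exact: col_inj_row_free_tr (B_free j) i i'.
Qed.

Lemma avec_in_codom_l i j k : avec a i j \in codom (fun i' => avec a i' k).
Proof.
case: a_derived => size_states _ _.
apply: (inj_ord_codom_subset size_states (@avec_inj_l k)) => [i'|];
  by rewrite mem_undup; apply: allpairs_f; rewrite mem_enum.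
Qed.

Lemma avec_in_codom_r i j k : avec a i j \in codom (avec a k).
Proof.
case: a_derived => size_states _ _.
apply: (inj_ord_codom_subset size_states (@avec_inj_r k)) => [i'|];
  by rewrite mem_undup; apply: allpairs_f; rewrite mem_enum.
Qed.

Lemma Amat_unit i : Amat a i \in unitmx.
Proof.
by case: a_derived => _ A_free _; rewrite -unitmx_tr -row_free_unit; apply: A_free.
Qed.

Variable o : 'I_n.

Lemma exists_col_perm_Amat :
  exists rho : 'I_n -> {perm 'I_n}, forall j, Amat a j = col_perm (rho j) (Amat a o).
Proof.
pose f j y := iinv (avec_in_codom_r j y o).
have f_inj j : injective (f j).
  move=> y y' /(congr1 (avec a o)) eq_f; apply: (@avec_inj_r j).
  by rewrite -(f_iinv (avec_in_codom_r j y o)) -(f_iinv (avec_in_codom_r j y' o)).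
exists (fun j => perm (f_inj j)) => j; apply/matrixP => k y; rewrite !mxE permE.
by have /matrixP/(_ k 0) := f_iinv (avec_in_codom_r j y o); rewrite !mxE.
Qed.

Lemma col_perm_Amat_transitive (rho : 'I_n -> {perm 'I_n}) :
  (forall j, Amat a j = col_perm (rho j) (Amat a o)) -> forall x, exists i, rho i o = x.
Proof.
move=> Amat_rho x; have /codomP[i eq_i] := avec_in_codom_l o x o.
exists i; apply: (@avec_inj_r o).
by rewrite -col_Amat -col_colsub -col_permEsub -Amat_rho col_Amat.
Qed.

End DerivedFromGroup.

Theorem corollary4 (R : realFieldType) (n : nat) (a : 'I_n -> 'I_n -> 'I_n -> R) :
  (0 < n)%N ->
  is_comm_semihypergroup a ->
  derived_from_group a ->
  exists (gT : finGroupType) (g : 'I_n -> gT),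
    [/\ abelian [set: gT], #|gT| = n, bijective g &
        forall i : 'I_n, exists c : 'I_n -> R,
          Amat a i = \sum_(l < n) c l *: regmx R g l].
Proof.
move=> n_gt0 [_ _ a_comm a_assoc] a_derived; pose o := Ordinal n_gt0.
have [rho Amat_rho] := exists_col_perm_Amat a_derived o.
have Ao_unit := Amat_unit a_derived o.
have rho_comm := rho_commute a_comm a_assoc Ao_unit Amat_rho.
have a_rho := a_rho_invariant a_comm a_assoc Ao_unit Amat_rho.
pose H := <<[set rho i | i : 'I_n]>>%G.
have abH : abelian H.
  rewrite abelian_gen; apply/centsP => _ /imsetP[i _ ->] _ /imsetP[j _ ->].
  exact: rho_comm.
have /fin_all_exists[ix ixE] := col_perm_Amat_transitive a_derived Amat_rho.
pose r x := rho (ix x).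
have r_in x : r x \in H by apply: mem_gen; apply: imset_f.
have g_bij := regular_subg_bij abH r_in ixE.
exists (subg_of H), (fun x => subg H (r x)); split=> //.
- by rewrite -(isog_abelian (isog_subg H)).
- by rewrite -(bij_eq_card g_bij) card_ord.
move=> i; exists (a i o); rewrite (Amat_sum_perm ixE (fun x => a_rho i (ix x))).
apply: eq_bigr => l _; congr (_ *: _); apply/matrixP => k j.
by rewrite !mxE (regular_subg_mulE abH r_in ixE).
Qed.
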